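(* Consider the following model. States $\omega_t\in\{0,1\}$, $t\in\{1,2\}$, with $\Pr[\omega_1=1]=\mu_0\in(0,1)$ and $\Pr[\omega_2=\omega\mid\omega_1=\omega]=\rho\in(1/2,1)$. In each period an agent A chooses $e_t\in\{0,1\}$; if $e_t=1$ he observes $\omega_t$, if $e_t=0$ he observes $\omega_t$ with probability $\pi\in(0,1)$ and nothing otherwise; he reports $r_t\in\{\varnothing,\omega_t\}$ if he observed $\omega_t$, else $r_t=\varnothing$. A's payoff is $x-c(e_1+e_2)$, $c>0$, with $x=\hat x(r_1,r_2)$. A mechanism consists of $\sigma_1\in\{0,1\}$, $\sigma_2:\{\varnothing,0,1\}\to\{0,1\}$, $\hat x:\{\varnothing,0,1\}^2\to\{0,1\}$; A best-responds, following the recommendation and disclosing when indifferent. A mechanism is IC if at every history occurring with positive probability A optimally obeys the testing recommendation and discloses every observed result, and $\hat x(r_1,\varnothing)=0$ whenever $\sigma_2(r_1)=1$. Let $\gamma=c/(1-\pi)$ and for $r_1\in\{\varnothing,0,1\}$ and $\mu\in[0,1]$ define $$v(r_1,\mu)=-c\sigma_2(r_1)+[\sigma_2(r_1)+(1-\sigma_2(r_1))\pi][\mu\hat x(r_1,1)+(1-\mu)\hat x(r_1,0)]+(1-\sigma_2(r_1))(1-\pi)\hat x(r_1,\varnothing).$$ Let $\mathbb{E}_{\mu_0}[v(\tilde r_1,\tilde\mu_2)]=\mu_0 v(1,\rho)+(1-\mu_0)v(0,1-\rho)$ and $\mathbb{E}_{\mu_0}[v(\varnothing,\tilde\mu_2)]=\mu_0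 v(\varnothing,\rho)+(1-\mu_0)v(\varnothing,1-\rho)$. Then in any IC mechanism with $\sigma_1=0$, $$\gamma\ \ge\ \mathbb{E}_{\mu_0}[v(\tilde r_1,\tilde\mu_2)]-\mathbb{E}_{\mu_0}[v(\varnothing,\tilde\mu_2)]\ \ge\ 0.$$ *)

From mathcomp Require Import all_boot all_order all_algebra.
Set Implicit Arguments. Unset Strict Implicit. Unset Printing Implicit Defensive.
Import Order.TTheory GRing.Theory Num.Theory.
Local Open Scope ring_scope.

(* States: bool (true = 1). Reports: option bool (None = "no report" ∅). *)
Definition rep := option bool.

Record mech := Mech {
  sig1 : bool;
  sig2 : rep -> bool;
  xh   : rep -> rep -> bool }.

Section Model.
Variables (R : realFieldType) (mu0 rho piA c : R) (M : mech).

Definition b2R (b : bool) : R := (b : nat)%:R.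

Definition xr (r1 r2 : rep) : R := b2R (xh M r1 r2).

(* best period-2 report after observing omega_2 = w (report w or ∅) *)
Definition bestrep (r1 : rep) (w : bool) : R :=
  Num.max (xr r1 (Some w)) (xr r1 None).

(* period-2 expected payoff of choosing effort e2, given period-1 report r1
   and belief mu = Pr[omega_2 = 1], followed by optimal disclosure *)
Definition U2 (r1 : rep) (mu : R) (e2 : bool) : R :=
  if e2 then - c + (mu * bestrep r1 true + (1 - mu) * bestrep r1 false)
  else piA * (mu * bestrep r1 true + (1 - mu) * bestrep r1 false)
       + (1 - piA) * xr r1 None.

Definition V2 (r1 : rep) (mu : R) : R := Num.max (U2 r1 mu true) (U2 r1 mu false).

(* belief about omega_2 when omega_1 was not observed *)
Definition mubar : R := mu0 * rho + (1 - mu0) * (1 - rho).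

(* period-1 expected payoff of effort e1, followed by optimal reporting and
   optimal continuation *)
Definition U1 (e1 : bool) : R :=
  let q := if e1 then 1 else piA in
  (if e1 then - c else 0)
  + q * (mu0 * Num.max (V2 (Some true) rho) (V2 None rho)
         + (1 - mu0) * Num.max (V2 (Some false) (1 - rho)) (V2 None (1 - rho)))
  + (1 - q) * V2 None mubar.

(* incentive compatibility at a period-2 history (r1, belief mu):
   obeying sigma2(r1) is optimal and disclosing each observed omega_2 is optimal *)
Definition IC2 (r1 : rep) (mu : R) : Prop :=
  U2 r1 mu (~~ sig2 M r1) <= U2 r1 mu (sig2 M r1)
  /\ (0 < mu -> xr r1 None <= xr r1 (Some true))
  /\ (mu < 1 -> xr r1 None <= xr r1 (Some false)).

Definition IC : Prop :=
  U1 (~~ sig1 M) <= U1 (sig1 M)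
  (* period 1 disclosure after observing omega_1 = 1 resp. 0 *)
  /\ V2 None rho <= V2 (Some true) rho
  /\ V2 None (1 - rho) <= V2 (Some false) (1 - rho)
  (* period 2 histories reached on path *)
  /\ IC2 (Some true) rho
  /\ IC2 (Some false) (1 - rho)
  /\ (sig1 M = false -> IC2 None mubar)
  /\ (forall r1, sig2 M r1 -> xh M r1 None = false).

Definition v (r1 : rep) (mu : R) : R :=
  let s := b2R (sig2 M r1) in
  - c * s + (s + (1 - s) * piA) * (mu * xr r1 (Some true) + (1 - mu) * xr r1 (Some false))
  + (1 - s) * (1 - piA) * xr r1 None.

Definition Ev_r1 : R := mu0 * v (Some true) rho + (1 - mu0) * v (Some false) (1 - rho).
Definition Ev_empty : R := mu0 * v None rho + (1 - mu0) * v None (1 - rho).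

End Model.

From mathcomp Require Import all_boot all_order all_algebra.
From mathcomp Require Import lra ring.
Import Order.TTheory GRing.Theory Num.Theory.
Local Open Scope ring_scope.

(* With sigma_1 = 0, testing in period 1 costs c and changes the outcome only
   in the (1 - pi) event where omega_1 would not have been seen anyway: there
   it replaces the uninformed continuation V2(∅, mubar) by the informed one
   (report omega_1, continue at belief rho or 1 - rho).  Period-1 obedience
   thus bounds (1 - pi) times the value of information by c.  That value is
   nonnegative because V2(∅, .) is a maximum of two affine functions of the
   belief, hence convex, and mubar is the mean of the posteriors.  Under IC
   every continuation value V2 occurring here equals v, which identifies the
   two values with the expectations of v in the statement. *)

Section PeriodTwo.
Variables (R : realFieldType) (piA c : R) (M : mech).

Lemma v_convex_comb r1 (a x y : R) :
  v piA c M r1 (a * x + (1 - a) * y)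
  = a * v piA c M r1 x + (1 - a) * v piA c M r1 y.
Proof. by rewrite /v; ring. Qed.

Lemma U2_convex_comb r1 (a x y : R) e :
  U2 piA c M r1 (a * x + (1 - a) * y) e
  = a * U2 piA c M r1 x e + (1 - a) * U2 piA c M r1 y e.
Proof. by case: e; rewrite /U2; ring. Qed.

Lemma le_U2_V2 r1 mu e : U2 piA c M r1 mu e <= V2 piA c M r1 mu.
Proof. by rewrite /V2 le_max; case: e; rewrite lexx ?orbT. Qed.

Lemma V2_convex r1 (a x y : R) : 0 <= a <= 1 ->
  V2 piA c M r1 (a * x + (1 - a) * y)
  <= a * V2 piA c M r1 x + (1 - a) * V2 piA c M r1 y.
Proof.
move=> /andP[a0 a1]; rewrite {1}/V2 ge_max !U2_convex_comb.
by apply/andP; split; apply: lerD; apply: ler_wpM2l; rewrite ?subr_ge0 ?le_U2_V2.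
Qed.

Lemma V2_IC2 r1 mu : 0 < mu < 1 -> IC2 piA c M r1 mu ->
  V2 piA c M r1 mu = v piA c M r1 mu.
Proof.
move=> /andP[mu_gt0 mu_lt1] [obey [discl1 discl0]].
have best1 : bestrep R M r1 true = xr R M r1 (Some true).
  by rewrite /bestrep max_l // discl1.
have best0 : bestrep R M r1 false = xr R M r1 (Some false).
  by rewrite /bestrep max_l // discl0.
rewrite /V2 /v; case: (sig2 M r1) obey => /= obey.
- by rewrite max_l // /U2 best1 best0 /b2R /=; ring.
- by rewrite max_r // /U2 best1 best0 /b2R /=; ring.
Qed.

End PeriodTwo.

Section PeriodOne.
Variables (R : realFieldType) (mu0 rho piA c : R) (M : mech).

Definition informed_value : R :=
  mu0 * Num.max (V2 piA c M (Some true) rho) (V2 piA c M None rho)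
  + (1 - mu0) * Num.max (V2 piA c M (Some false) (1 - rho))
                        (V2 piA c M None (1 - rho)).

Lemma U1_test_gain :
  U1 mu0 rho piA c M true - U1 mu0 rho piA c M false
  = (1 - piA) * (informed_value - V2 piA c M None (mubar mu0 rho)) - c.
Proof. by rewrite /U1 /informed_value /=; ring. Qed.

Lemma informed_value_ge : 0 <= mu0 <= 1 ->
  V2 piA c M None (mubar mu0 rho) <= informed_value.
Proof.
move=> mu0_01; rewrite /mubar.
apply: le_trans (V2_convex _ piA c M None _ rho (1 - rho) mu0_01) _.
move: mu0_01 => /andP[m0 m1].
by apply: lerD; apply: ler_wpM2l; rewrite ?subr_ge0 // le_max lexx orbT.
Qed.

Lemma informed_value_Ev_r1 : 0 < rho < 1 -> IC mu0 rho piA c M ->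
  informed_value = Ev_r1 mu0 rho piA c M.
Proof.
move=> /andP[r0 r1] [_ [discl1 [discl0 [ic1 [ic0 _]]]]].
rewrite /informed_value /Ev_r1 (max_l discl1) (max_l discl0).
by rewrite !V2_IC2 //; apply/andP; split; lra.
Qed.

Lemma V2_mubar_Ev_empty : 0 < mu0 < 1 -> 0 < rho < 1 ->
  IC mu0 rho piA c M -> sig1 M = false ->
  V2 piA c M None (mubar mu0 rho) = Ev_empty mu0 rho piA c M.
Proof.
move=> /andP[m0 m1] /andP[r0 r1] [_ [_ [_ [_ [_ [icE _]]]]]] /icE ic_none.
have mubar_01 : 0 < mubar mu0 rho < 1 by rewrite /mubar; apply/andP; split; nra.
by rewrite V2_IC2 // /mubar v_convex_comb.
Qed.

End PeriodOne.

Theorem lemma7 (R : realFieldType) (mu0 rho piA c : R) (M : mech) :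
  0 < mu0 < 1 -> 2^-1 < rho < 1 -> 0 < piA < 1 -> 0 < c ->
  IC mu0 rho piA c M -> sig1 M = false ->
  Ev_r1 mu0 rho piA c M - Ev_empty mu0 rho piA c M <= c / (1 - piA)
  /\ 0 <= Ev_r1 mu0 rho piA c M - Ev_empty mu0 rho piA c M.
Proof.
move=> mu0_01 /andP[rho_gt rho_lt1] /andP[p0 p1] _ ic s1.
have rho_01 : 0 < rho < 1.
  by rewrite rho_lt1 andbT (lt_trans _ rho_gt) // invr_gt0.
rewrite -informed_value_Ev_r1 // -V2_mubar_Ev_empty //.
split; last first.
  by rewrite subr_ge0 informed_value_ge //; case/andP: mu0_01 => *; rewrite !ltW.
have := ic.1; rewrite s1 -subr_ge0 -opprB oppr_ge0 U1_test_gain => gain.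
by rewrite ler_pdivlMr ?subr_gt0 //; lra.
Qed.
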